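(* Let $A$ be a bounded distributive lattice and $X$ its Priestley space. The following are equivalent: (1) $A$ is proHeyting; (2) for all clopen upsets $U,V$ of $X$, $X\setminus{\downarrow}(U\setminus V)$ is a DM-set; (3) for every clopen subset $U$ of $X$, $X\setminus{\downarrow}U$ is a DM-set.
   Context: A relative annihilator of $A$ is $\langle a,b\rangle=\{x\in A:a\wedge x\le b\}$; $A$ is proHeyting if every relative annihilator is a normal ideal (a downset $N$ with $N=N^{u\ell}$). The Priestley space $X$ of $A$ is the set of prime filters ordered by inclusion, topologized by the basis $\{\mathfrak s(a)\setminus\mathfrak s(b)\}$ with $\mathfrak s(a)=\{x:a\in x\}$; $\mathfrak s$ is an isomorphism of $A$ onto the clopen upsets of $X$. With ${\sf cl}$ the topological closure, ${\sf cl_2}(S)={\uparrow}{\sf cl}(S)$ and ${\sf int_1}(S)=X\setminus{\downarrow}(X\setminus{\sf int}(S))$, a DM-set is an open upset $U$ with ${\sf int_1\,cl_2}(U)=U$. *)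

From HB Require Import structures.
From mathcomp Require Import all_boot all_order.
Set Implicit Arguments. Unset Strict Implicit. Unset Printing Implicit Defensive.
Import Order.TTheory.
Local Open Scope order_scope.

Section Priestley.
Context {disp : Order.disp_t} (A : tbDistrLatticeType disp).

Definition lower_set (N : A -> Prop) : Prop :=
  forall x y : A, N x -> y <= x -> N y.

Definition upper_bounds (N : A -> Prop) : A -> Prop :=
  fun y => forall x, N x -> x <= y.
Definition lower_bounds (N : A -> Prop) : A -> Prop :=
  fun y => forall x, N x -> y <= x.

Definition normal_ideal (N : A -> Prop) : Prop :=
  lower_set N /\ N = lower_bounds (upper_bounds N).

Definition rel_ann (a b : A) : A -> Prop := fun x => Order.meet a x <= b.

Definition proHeyting : Prop := forall a b : A, normal_ideal (rel_ann a b).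

Definition is_filter (F : A -> Prop) : Prop :=
  F \top /\ (forall x y, F x -> x <= y -> F y) /\
  (forall x y, F x -> F y -> F (Order.meet x y)).

Definition is_prime_filter (F : A -> Prop) : Prop :=
  is_filter F /\ ~ F \bot /\ (forall x y, F (Order.join x y) -> F x \/ F y).

Definition PSpace := {F : A -> Prop | is_prime_filter F}.

Definition ple (x y : PSpace) : Prop := forall a, proj1_sig x a -> proj1_sig y a.

Definition sfun (a : A) : PSpace -> Prop := fun x => proj1_sig x a.

Definition basic (a b : A) : PSpace -> Prop := fun x => sfun a x /\ ~ sfun b x.

Definition is_open (S : PSpace -> Prop) : Prop :=
  forall x, S x -> exists a b, basic a b x /\ (forall y, basic a b y -> S y).

Definition compl (S : PSpace -> Prop) : PSpace -> Prop := fun x => ~ S x.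
Definition setminus (S T : PSpace -> Prop) : PSpace -> Prop := fun x => S x /\ ~ T x.

Definition is_clopen (S : PSpace -> Prop) : Prop := is_open S /\ is_open (compl S).

Definition interior (S : PSpace -> Prop) : PSpace -> Prop :=
  fun x => exists W, is_open W /\ W x /\ (forall y, W y -> S y).

Definition closure (S : PSpace -> Prop) : PSpace -> Prop :=
  fun x => forall W, is_open W -> W x -> exists y, W y /\ S y.

Definition up (S : PSpace -> Prop) : PSpace -> Prop :=
  fun y => exists x, S x /\ ple x y.
Definition down (S : PSpace -> Prop) : PSpace -> Prop :=
  fun y => exists x, S x /\ ple y x.

Definition is_upset (S : PSpace -> Prop) : Prop :=
  forall x y, S x -> ple x y -> S y.

Definition is_clopen_upset (S : PSpace -> Prop) : Prop := is_clopen S /\ is_upset S.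

Definition cl2 (S : PSpace -> Prop) : PSpace -> Prop := up (closure S).
Definition int1 (S : PSpace -> Prop) : PSpace -> Prop := compl (down (compl (interior S))).

Definition DMset (U : PSpace -> Prop) : Prop :=
  is_open U /\ is_upset U /\ int1 (cl2 U) = U.

End Priestley.

From Pilot Require Import Defs.
From mathcomp Require Import all_boot all_order.
From mathcomp Require Import boolp.
From mathcomp Require classical_sets.
Set Implicit Arguments. Unset Strict Implicit. Unset Printing Implicit Defensive.
Import Order.TTheory.
Local Open Scope order_scope.

(* For N a subset of A let W N (sfun_union N) be the open upset of the points
   meeting N. Then X \ down (s a \ s b) = W <a,b>, and the key computation is
   int1 (cl2 (W N)) = W (N^{ul}) for every N. Hence X \ down (s a \ s b) is a
   DM-set exactly when W <a,b> = W <a,b>^{ul}, i.e. when the ideal <a,b> is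
   normal; as the clopen upsets are the s a, this is (1) <-> (2). For
   (2) -> (3): X \ down U is open when U is closed, and if y <= w with w in U,
   a basic set s c \ s d around w inside U gives a DM-set
   X \ down (s c \ s d) that contains X \ down U but not y.
   All separation arguments are instances of one relative prime filter
   theorem, proved by Zorn's lemma on pairs (filter, ideal). *)

Section RelativePrimeFilterTheorem.
Context {disp : Order.disp_t} {A : tbDistrLatticeType disp}.

Definition is_ideal (I : A -> Prop) : Prop :=
  I \bot /\ (forall x y, I x -> y <= x -> I y) /\ (forall x y, I x -> I y -> I (x `|` y)).

Lemma is_filter_ge (c : A) : is_filter (fun x => c <= x).
Proof.
split; [exact: lex1 | split]; first by move=> x y cx xy; exact: le_trans cx xy.
by move=> x y cx cy; rewrite lexI cx cy.
Qed.

Lemma is_ideal_le (d : A) : is_ideal (fun x => x <= d).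
Proof.
split; [exact: le0x | split]; first by move=> x y xd yx; exact: le_trans yx xd.
by move=> x y xd yd; rewrite leUx xd yd.
Qed.

Lemma is_filter_adjoin (F : A -> Prop) (a : A) :
  is_filter F -> is_filter (fun x => exists2 f, F f & f `&` a <= x).
Proof.
move=> [topF [upF meetF]]; split; [by exists \top => //; exact: lex1 | split].
  by move=> x y [f Ff fx] xy; exists f => //; exact: le_trans fx xy.
move=> x y [f Ff fx] [g Fg gy]; exists (f `&` g); first exact: meetF.
by rewrite lexI (le_trans _ fx) ?(le_trans _ gy) // leI2 ?leIl ?leIr.
Qed.

Lemma is_ideal_adjoin (J : A -> Prop) (a : A) :
  is_ideal J -> is_ideal (fun x => exists2 j, J j & x <= j `|` a).
Proof.
move=> [botJ [downJ joinJ]]; split; [by exists \bot => //; exact: le0x | split].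
  by move=> x y [j Jj xj] yx; exists j => //; exact: le_trans yx xj.
move=> x y [j Jj xj] [k Jk yk]; exists (j `|` k); first exact: joinJ.
by rewrite leUx (le_trans xj) ?(le_trans yk) // leU2 ?leUl ?leUr.
Qed.

Lemma is_ideal_rel_ann (a b : A) : is_ideal (rel_ann a b).
Proof.
rewrite /rel_ann; split; first by rewrite meetx0 le0x.
split; first by move=> x y axb yx; apply: le_trans axb; exact: leI2.
by move=> x y axb ayb; rewrite meetUr leUx axb ayb.
Qed.

Lemma le_of_meet_join (f a j : A) : f `&` a <= j -> f <= j `|` a -> f <= j.
Proof. by move=> faj /meet_l <-; rewrite meetUr leUx leIr. Qed.

(* [R f j] abstracts "f is not below j": the prime filter theorem only uses
   these three properties of that relation. *)
Definition splitting (R : A -> A -> Prop) : Prop :=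
  [/\ forall x, ~ R x x,
      forall f j f' j', R f j -> f <= f' -> j' <= j -> R f' j'
    & forall f j a, R f j -> R (f `&` a) j \/ R f (j `|` a)].

Lemma splitting_nle : splitting (fun f j : A => ~ f <= j).
Proof.
split; first by move=> x; rewrite lexx.
  by move=> f j f' j' fj ff' j'j f'j'; apply: fj; exact: le_trans ff' (le_trans f'j' j'j).
move=> f j a fj; apply: contrapT => /not_orP [/contrapT faj /contrapT fja].
exact: fj (le_of_meet_join faj fja).
Qed.

Lemma splitting_join_shift (R : A -> A -> Prop) (U : A -> Prop) :
  splitting R -> splitting (fun f j => exists2 u, U u & R f (j `|` u)).
Proof.
move=> [irrR monoR splitR]; split.
- by move=> x [u _ Rx]; exact: irrR x (monoR _ _ _ _ Rx (lexx x) (leUl _ _)).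
- move=> f j f' j' [u Uu Rfj] ff' j'j; exists u => //.
  by apply: monoR Rfj ff' _; exact: leU2.
- move=> f j a [u Uu /(splitR _ _ a) [Rfa | Rfja]]; [left | right]; exists u => //.
  by rewrite -joinA [u `|` a]joinC joinA in Rfja.
Qed.

Lemma splitting_meet_shift (R : A -> A -> Prop) (N : A -> Prop) :
  splitting R -> splitting (fun f j => exists2 n, N n & R (f `&` n) j).
Proof.
move=> [irrR monoR splitR]; split.
- by move=> x [n _ Rx]; exact: irrR x (monoR _ _ _ _ Rx (leIl _ _) (lexx x)).
- move=> f j f' j' [n Nn Rfj] ff' j'j; exists n => //.
  by apply: monoR Rfj _ j'j; exact: leI2.
- move=> f j a [n Nn /(splitR _ _ a) [Rfna | Rfja]]; [left | right]; exists n => //.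
  by rewrite -meetA [n `&` a]meetC meetA in Rfna.
Qed.

Lemma splitting_uniform (R : A -> A -> Prop) (F J : A -> Prop) (a : A) :
  splitting R -> is_filter F -> is_ideal J -> (forall f j, F f -> J j -> R f j) ->
  (forall f j, F f -> J j -> R (f `&` a) j) \/ (forall f j, F f -> J j -> R f (j `|` a)).
Proof.
move=> [_ monoR splitR] [_ [_ meetF]] [_ [_ joinJ]] RFJ.
have [|notRa] := EM (forall f j, F f -> J j -> R (f `&` a) j); [by left | right].
move=> f2 j2 F2 J2; apply: contrapT => nR2; apply: notRa => f1 j1 F1 J1.
have [R12a | R12a] := splitR _ _ a (RFJ _ _ (meetF _ _ F1 F2) (joinJ _ _ J1 J2)).
  by apply: monoR R12a _ (leUl _ _); exact: leI2 (leIl _ _) (lexx a).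
by case: nR2; apply: monoR R12a (leIr _ _) _; exact: leU2 (leUr _ _) (lexx a).
Qed.

Section MaximalPair.
Variables (R : A -> A -> Prop) (G I : A -> Prop).

Definition pair_le (p q : (A -> Prop) * (A -> Prop)) : Prop :=
  (forall x, p.1 x -> q.1 x) /\ (forall x, p.2 x -> q.2 x).

Definition admissible (p : (A -> Prop) * (A -> Prop)) : Prop :=
  [/\ is_filter p.1, is_ideal p.2, forall x, G x -> p.1 x, forall x, I x -> p.2 x
    & forall f j, p.1 f -> p.2 j -> R f j].

Lemma admissible_chain_union (C : (A -> Prop) * (A -> Prop) -> Prop) :
  (exists p, C p) -> (forall p, C p -> admissible p) ->
  (forall p q, C p -> C q -> pair_le p q \/ pair_le q p) ->
  admissible (fun x => exists2 p, C p & p.1 x, fun x => exists2 p, C p & p.2 x).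
Proof.
move=> [p0 Cp0] admC totC.
have common p q : C p -> C q -> exists2 r, C r & pair_le p r /\ pair_le q r.
  by move=> Cp Cq; case: (totC p q Cp Cq) => pq; [exists q | exists p].
have [[topF _] [botJ _] GF IJ _] := admC p0 Cp0.
split => /=.
- split; first by exists p0.
  split=> [x y [p Cp px] xy | x y [p Cp px] [q Cq qy]].
    by exists p => //; have [[_ [upF _]] _ _ _ _] := admC p Cp; exact: upF px xy.
  have [r Cr [[pr _] [qr _]]] := common p q Cp Cq.
  by exists r => //; have [[_ [_ meetF]] _ _ _ _] := admC r Cr; apply: meetF; auto.
- split; first by exists p0.
  split=> [x y [p Cp px] yx | x y [p Cp px] [q Cq qy]].
    by exists p => //; have [_ [_ [downJ _]] _ _ _] := admC p Cp; exact: downJ px yx.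
  have [r Cr [[_ pr] [_ qr]]] := common p q Cp Cq.
  by exists r => //; have [_ [_ [_ joinJ]] _ _ _] := admC r Cr; apply: joinJ; auto.
- by move=> x /GF; exists p0.
- by move=> x /IJ; exists p0.
- move=> f j [p Cp pf] [q Cq qj]; have [r Cr [[pr _] [_ qr]]] := common p q Cp Cq.
  by have [_ _ _ _ RF] := admC r Cr; apply: RF; auto.
Qed.

Lemma exists_maximal_admissible : admissible (G, I) ->
  exists2 p, admissible p & forall q, admissible q -> pair_le p q -> pair_le q p.
Proof.
move=> admGI.
pose T := {p | admissible p}.
pose leT (s t : T) := `[< pair_le (sval s) (sval t) >].
have bottom (t : T) : pair_le (G, I) (sval t) by have [] := svalP t.
have [| | |t tmax] := @classical_sets.ZL_preorder T (exist _ _ admGI) leT.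
- by move=> t; apply/asboolP.
- move=> r s t /asboolP [rs1 rs2] /asboolP [st1 st2].
  by apply/asboolP; split=> x; auto.
- move=> C totC.
  (* The union of the empty chain is not admissible, hence the extra (G, I). *)
  pose C' p := p = (G, I) \/ exists2 t, C t & sval t = p.
  have admC' p : C' p -> admissible p by case=> [-> | [t _ <-]] //; exact: svalP.
  have totC' p q : C' p -> C' q -> pair_le p q \/ pair_le q p.
    case=> [-> | [s Cs <-]] [-> | [t Ct <-]].
    - by left.
    - by left; exact: bottom.
    - by right; exact: bottom.
    - by case: (totC s t Cs Ct) => /asboolP; [left | right].
  have admU := admissible_chain_union (ex_intro _ _ (or_introl erefl)) admC' totC'.
  exists (exist _ _ admU) => s Cs; apply/asboolP.
  by split=> x sx; exists (sval s) => //; right; exists s.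
- exists (sval t); first exact: svalP.
  by move=> q admq tq; apply/asboolP/(tmax (exist _ q admq))/asboolP.
Qed.

Lemma maximal_admissible_cover (p : (A -> Prop) * (A -> Prop)) : splitting R ->
  admissible p -> (forall q, admissible q -> pair_le p q -> pair_le q p) ->
  forall a, p.1 a \/ p.2 a.
Proof.
case: p => F J splitR admFJ pmax a; have [filF idJ GF IJ RFJ] := admFJ.
have [_ monoR _] := splitR.
have [RFa | RJa] := splitting_uniform a splitR filF idJ RFJ; [left | right].
- have admFa : admissible (fun x => exists2 f, F f & f `&` a <= x, J).
    split=> //=; first exact: is_filter_adjoin.
      by move=> x /GF Fx; exists x => //; exact: leIl.
    by move=> x j [f Ff fax] Jj; apply: monoR (RFa f j Ff Jj) fax _.
  have F_Fa : pair_le (F, J) (fun x => exists2 f, F f & f `&` a <= x, J).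
    by split=> //= x Fx; exists x => //; exact: leIl.
  have [/= Fa_F _] := pmax _ admFa F_Fa.
  by apply: Fa_F; exists \top; [case: filF | rewrite meet1x].
- have admJa : admissible (F, fun x => exists2 j, J j & x <= j `|` a).
    split=> //=; first exact: is_ideal_adjoin.
      by move=> x /IJ Jx; exists x => //; exact: leUl.
    by move=> f x Ff [j Jj xja]; apply: monoR (RJa f j Ff Jj) _ xja.
  have J_Ja : pair_le (F, J) (F, fun x => exists2 j, J j & x <= j `|` a).
    by split=> //= x Jx; exists x => //; exact: leUl.
  have [/= _ Ja_J] := pmax _ admJa J_Ja.
  by apply: Ja_J; exists \bot; [case: idJ | rewrite join0x].
Qed.

End MaximalPair.

Theorem exists_point_splitting (R : A -> A -> Prop) (G I : A -> Prop) :
  splitting R -> is_filter G -> is_ideal I -> (forall g i, G g -> I i -> R g i) ->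
  exists x : PSpace A, [/\ forall g, G g -> sfun g x, forall i, I i -> ~ sfun i x
                         & forall f j, sfun f x -> ~ sfun j x -> R f j].
Proof.
move=> splitR filG idI RGI.
have admGI : admissible R G I (G, I) by split.
have [[F J] admFJ pmax] := exists_maximal_admissible admGI.
have cover := maximal_admissible_cover splitR admFJ pmax.
have [/= filF [botJ [_ joinJ]] GF IJ RFJ] := admFJ.
have [irrR _ _] := splitR.
have FJ x : F x -> J x -> False by move=> Fx Jx; exact: irrR x (RFJ _ _ Fx Jx).
have notF_J x : ~ F x -> J x by case: (cover x).
have primeF : is_prime_filter F.
  split=> //; split; first by move/FJ; apply.
  move=> x y Fxy; apply: contrapT => /not_orP [/notF_J Jx /notF_J Jy].
  exact: FJ Fxy (joinJ _ _ Jx Jy).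
exists (exist _ F primeF); split=> //=.
- by move=> i /IJ Ji Fi; exact: FJ Fi Ji.
- by move=> f j Ff /notF_J; exact: RFJ.
Qed.

End RelativePrimeFilterTheorem.

Section PriestleySpace.
Context {disp : Order.disp_t} (A : tbDistrLatticeType disp).
Implicit Types (a b c d : A) (x y z : PSpace A) (N : A -> Prop) (S U V K : PSpace A -> Prop).

Lemma sfun_top x : sfun \top x.
Proof. by case: (proj2_sig x) => [[]]. Qed.

Lemma sfun_bot x : ~ sfun \bot x.
Proof. by case: (proj2_sig x) => [_ []]. Qed.

Lemma sfun_le x a b : a <= b -> sfun a x -> sfun b x.
Proof. by case: (proj2_sig x) => [[_ [upx _]] _] ab ax; exact: upx ax ab. Qed.

Lemma sfun_meet x a b : sfun a x -> sfun b x -> sfun (a `&` b) x.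
Proof. by case: (proj2_sig x) => [[_ [_ meetx]] _]; exact: meetx. Qed.

Lemma sfun_join x a b : sfun (a `|` b) x -> sfun a x \/ sfun b x.
Proof. by case: (proj2_sig x) => [_ [_ joinx]]; exact: joinx. Qed.

Lemma is_filter_point x : is_filter (fun a => sfun a x).
Proof. by case: (proj2_sig x). Qed.

Lemma is_ideal_notin x : is_ideal (fun a => ~ sfun a x).
Proof.
split; first exact: sfun_bot.
split; first by move=> a b ax ba bx; apply: ax; exact: sfun_le ba bx.
by move=> a b ax bx /sfun_join [].
Qed.

Lemma exists_point_sep_filter_ideal (G I : A -> Prop) :
  is_filter G -> is_ideal I -> (forall g i, G g -> I i -> ~ g <= i) ->
  exists x, (forall g, G g -> sfun g x) /\ (forall i, I i -> ~ sfun i x).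
Proof.
move=> filG idI GI.
by have [x [Gx Ix _]] := exists_point_splitting splitting_nle filG idI GI; exists x.
Qed.

Lemma exists_point_sep c d : ~ c <= d -> exists x, sfun c x /\ ~ sfun d x.
Proof.
move=> ncd; have [|x [cx dx]] := exists_point_sep_filter_ideal (is_filter_ge c) (is_ideal_le d).
  by move=> g i cg id gi; apply: ncd; exact: le_trans cg (le_trans gi id).
by exists x; split; [apply: cx | apply: dx].
Qed.

Lemma open_interior S : (forall x, S x -> interior S x) -> is_open S.
Proof.
move=> intS x /intS [W [openW [Wx WS]]].
by have [a [b [abx abW]]] := openW x Wx; exists a, b; split=> // y /abW /WS.
Qed.

Lemma open_basic a b : is_open (basic a b).
Proof. by move=> x abx; exists a, b. Qed.

Lemma open_sfun a : is_open (sfun a).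
Proof.
move=> x ax; exists a, \bot; split; last by move=> y [].
by split=> //; exact: sfun_bot.
Qed.

Lemma openI S V : is_open S -> is_open V -> is_open (fun x => S x /\ V x).
Proof.
move=> openS openV x [/openS [a [b [[ax bx] abS]]] /openV [c [d [[cx dx] cdV]]]].
exists (a `&` c), (b `|` d); split; first by split; [exact: sfun_meet | move/sfun_join => []].
move=> y [acy bdy]; split; [apply: abS | apply: cdV]; split.
- exact: sfun_le (leIl _ _) acy.
- by move=> by'; apply: bdy; exact: sfun_le (leUl _ _) by'.
- exact: sfun_le (leIr _ _) acy.
- by move=> dy; apply: bdy; exact: sfun_le (leUr _ _) dy.
Qed.

Lemma clopen_upset_sfun a : is_clopen_upset (sfun a).
Proof.
split; last by move=> x y ax; apply.
split; first exact: open_sfun.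
move=> x nax; exists \top, a; split; last by move=> y [].
by split=> //; exact: sfun_top.
Qed.

Lemma clopen_setminus U V : is_clopen_upset U -> is_clopen_upset V ->
  is_clopen (setminus U V).
Proof.
move=> [[openU closedU] _] [[openV closedV] _]; split; first exact: openI.
apply: open_interior => x nUVx; have [Ux | nUx] := EM (U x).
- have Vx : V x by apply: contrapT => nVx; exact: nUVx.
  by exists V; do 2!split=> //; move=> y Vy [].
- by exists (compl U); do 2!split=> //; move=> y nUy [].
Qed.

Lemma splitting_sep_in K :
  splitting (fun f j => exists w, [/\ K w, sfun f w & ~ sfun j w]).
Proof.
split; first by move=> a [w []].
  move=> f j f' j' [w [Kw fw jw]] ff' j'j; exists w; split=> //.
    exact: sfun_le ff' fw.
  by move=> j'w; apply: jw; exact: sfun_le j'j j'w.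
move=> f j a [w [Kw fw jw]]; have [aw | naw] := EM (sfun a w).
  by left; exists w; split=> //; exact: sfun_meet.
by right; exists w; split=> // /sfun_join [].
Qed.

Lemma closed_exists_point K (G I : A -> Prop) :
  is_open (compl K) -> is_filter G -> is_ideal I ->
  (forall g i, G g -> I i -> exists w, [/\ K w, sfun g w & ~ sfun i w]) ->
  exists w, [/\ K w, forall g, G g -> sfun g w & forall i, I i -> ~ sfun i w].
Proof.
move=> closedK filG idI GIK.
have [x [Gx Ix sepx]] := exists_point_splitting (splitting_sep_in K) filG idI GIK.
exists x; split=> //; apply: contrapT => /closedK [c [d [cdx cdK]]].
by have [w [Kw cw dw]] := sepx c d cdx.1 cdx.2; exact: cdK w (conj cw dw) Kw.
Qed.

Lemma sfun_disjoint_closed K y : is_open (compl K) -> ~ down K y ->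
  exists2 a, sfun a y & forall w, K w -> ~ sfun a w.
Proof.
move=> closedK ny; apply: contrapT => nsep; apply: ny.
have [|w [Kw yw _]] := closed_exists_point closedK (is_filter_point y) (is_ideal_le \bot).
  move=> g i gy i0; apply: contrapT => nw; apply: nsep; exists g => // w Kw gw.
  by apply: nw; exists w; split=> // iw; exact: sfun_bot (sfun_le i0 iw).
by exists w.
Qed.

Lemma open_compl_down K : is_open (compl K) -> is_open (compl (down K)).
Proof.
move=> closedK; apply: open_interior => y /(sfun_disjoint_closed closedK) [a ay aK].
exists (sfun a); split; first exact: open_sfun.
split=> // v av [w [Kw vw]]; exact: aK w Kw (vw _ av).
Qed.

Lemma compl_down_upset S : is_upset (compl (down S)).
Proof.
by move=> x y nx xy [z [Sz yz]]; apply: nx; exists z; split=> // a /xy /yz.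
Qed.

Lemma open_upset_sfun U w : is_open U -> is_upset U -> U w ->
  exists2 a, sfun a w & forall v, sfun a v -> U v.
Proof.
move=> openU upU Uw.
have closedCU : is_open (compl (compl U)).
  apply: open_interior => x /contrapT Ux; exists U; do 2!split=> //.
  by move=> y Uy; apply.
have [|a aw aU] := sfun_disjoint_closed (y := w) closedCU.
  by move=> [v [nUv wv]]; exact: nUv (upU _ _ Uw wv).
by exists a => // v av; apply: contrapT => nUv; exact: aU v nUv av.
Qed.

Lemma clopen_upset_eq U : is_clopen_upset U -> exists a, U = sfun a.
Proof.
move=> [[openU closedU] upU].
pose I a := forall v, sfun a v -> U v.
have idI : is_ideal I.
  split; first by move=> v /sfun_bot.
  split; first by move=> a b aU ba v bv; apply: aU; exact: sfun_le ba bv.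
  by move=> a b aU bU v /sfun_join [/aU | /bU].
have [[a Ia aU] | nall] := EM (exists2 a, I a & forall w, U w -> sfun a w).
  by exists a; apply/predeqP => w; split; [exact: aU | exact: Ia].
have [|w [Uw _ wI]] := closed_exists_point closedU (is_filter_ge \top) idI.
  move=> g i top_g Ii; apply: contrapT => nw; apply: nall; exists i => // w Uw.
  apply: contrapT => iw; apply: nw; exists w; split=> //.
  exact: sfun_le top_g (sfun_top w).
by have [a aw aU] := open_upset_sfun openU upU Uw; case: (wI a aU aw).
Qed.

Definition sfun_union N : PSpace A -> Prop := fun x => exists2 n, N n & sfun n x.

Lemma open_sfun_union N : is_open (sfun_union N).
Proof.
move=> x [n Nn nx]; exists n, \bot; split; first by split=> //; exact: sfun_bot.
by move=> y [ny _]; exists n.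
Qed.

Lemma upset_sfun_union N : is_upset (sfun_union N).
Proof. by move=> x y [n Nn nx] xy; exists n => //; exact: xy. Qed.

Lemma compl_down_diff a b :
  compl (down (setminus (sfun a) (sfun b))) = sfun_union (rel_ann a b).
Proof.
apply/predeqP => x; split; last first.
  by move=> [c abc cx] [z [[az bz] xz]]; apply: bz; exact: sfun_le abc (sfun_meet az (xz _ cx)).
move=> nx; apply: contrapT => nann.
have [|z [Gz bz]] := exists_point_sep_filter_ideal
  (is_filter_adjoin a (is_filter_point x)) (is_ideal_le b).
  move=> g i [c cx cag] ib gi; apply: nann; exists c => //.
  by rewrite /rel_ann meetC (le_trans cag (le_trans gi ib)).
apply: nx; exists z; split; [split|].
- by apply: Gz; exists \top; [exact: sfun_top | rewrite meet1x].
- by apply: bz.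
- by move=> t tx; apply: Gz; exists t => //; exact: leIl.
Qed.

Lemma sfun_union_sub_ideal (M N : A -> Prop) : is_ideal N ->
  (forall x, sfun_union M x -> sfun_union N x) -> forall m, M m -> N m.
Proof.
move=> idN MN m Mm; apply: contrapT => nNm.
have [|x [mx Nx]] := exists_point_sep_filter_ideal (is_filter_ge m) idN.
  by move=> g i mg Ni gi; apply: nNm; have [_ [downN _]] := idN; exact: downN Ni (le_trans mg gi).
by have [n Nn nx] := MN x (ex_intro2 _ _ m Mm (mx m (lexx m))); exact: Nx n Nn nx.
Qed.

Lemma closure_sfun_unionP N x : Defs.closure (sfun_union N) x <->
  (forall c d, sfun c x -> ~ sfun d x -> exists2 n, N n & ~ c `&` n <= d).
Proof.
split.
- move=> clx c d cx dx.
  have [y [[cy dy] [n Nn ny]]] := clx (basic c d) (open_basic (a := c) (b := d)) (conj cx dx).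
  by exists n => // cnd; apply: dy; exact: sfun_le cnd (sfun_meet cy ny).
- move=> sepx O openO Ox; have [c [d [[cx dx] cdO]]] := openO x Ox.
  have [n Nn /exists_point_sep [v [cnv dv]]] := sepx c d cx dx.
  exists v; split; first by apply: cdO; split=> //; exact: sfun_le (leIl _ _) cnv.
  by exists n => //; exact: sfun_le (leIr _ _) cnv.
Qed.

Lemma closure_upper_bounds N x u : Defs.closure (sfun_union N) x ->
  upper_bounds N u -> sfun u x.
Proof.
move=> /closure_sfun_unionP clx uN; apply: contrapT => ux.
have [n Nn] := clx _ _ (sfun_top x) ux.
by rewrite meet1x; apply; exact: uN.
Qed.

Lemma sub_int1_cl2 U : is_open U -> is_upset U -> forall y, U y -> int1 (cl2 U) y.
Proof.
move=> openU upU y Uy [z [nz yz]]; apply: nz; exists U; split=> //; split.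
  exact: upU Uy yz.
by move=> v Uv; exists v; split=> // O _ Ov; exists v.
Qed.

Lemma int1_cl2_mono S V : (forall x, S x -> V x) ->
  forall y, int1 (cl2 S) y -> int1 (cl2 V) y.
Proof.
move=> SV y Sy [z [nz yz]]; apply: Sy; exists z; split=> //.
move=> [O [openO [Oz OS]]]; apply: nz; exists O; split=> //; split=> //.
move=> v /OS [x [clx xv]]; exists x; split=> //.
by move=> O' openO' O'x; have [t [O't St]] := clx O' openO' O'x; exists t; split; auto.
Qed.

Lemma int1_interior S y z : int1 S y -> ple y z -> interior S z.
Proof. by move=> Sy yz; apply: contrapT => nz; apply: Sy; exists z. Qed.

Lemma DMset_intro U : is_open U -> is_upset U ->
  (forall y, int1 (cl2 U) y -> U y) -> DMset U.
Proof.
move=> openU upU int1U; do 2!split=> //.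
by apply/predeqP => y; split; [exact: int1U | exact: sub_int1_cl2].
Qed.

Lemma int1_cl2_sub_upper_lower N y : int1 (cl2 (sfun_union N)) y ->
  sfun_union (lower_bounds (upper_bounds N)) y.
Proof.
move=> int1y; apply: contrapT => nul.
have [|z [yz _ Rz]] := exists_point_splitting (splitting_join_shift (upper_bounds N) splitting_nle)
  (is_filter_point y) (is_ideal_le \bot).
  move=> g i gy i0.
  have /existsNP [u /not_implyP [uN gu]] : ~ lower_bounds (upper_bounds N) g.
    by move=> ulg; apply: nul; exists g.
  exists u => // giu; apply: gu; apply: le_trans giu _.
  by rewrite leUx lexx (le_trans i0 (le0x u)).
have [O [openO [Oz OW]]] := int1_interior int1y yz.
have [c [d [[cz dz] cdO]]] := openO z Oz.
have [u uN /exists_point_sep [v [cv duv]]] := Rz c d cz dz.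
have [x [clx xv]] : cl2 (sfun_union N) v.
  by apply: OW; apply: cdO; split=> // dv; apply: duv; exact: sfun_le (leUl _ _) dv.
by apply: duv; apply: sfun_le (leUr _ _) _; exact: xv _ (closure_upper_bounds clx uN).
Qed.

Lemma upper_lower_sub_int1_cl2 N y : sfun_union (lower_bounds (upper_bounds N)) y ->
  int1 (cl2 (sfun_union N)) y.
Proof.
move=> [m ulm my] [z [nz yz]]; apply: nz.
exists (sfun m); split; first exact: open_sfun.
split=> [|w mw]; first exact: yz.
have [|x [_ xw Rx]] := exists_point_splitting (splitting_meet_shift N splitting_nle)
  (is_filter_ge \top) (is_ideal_notin w).
  move=> g i topg iw; apply: contrapT => nsep; apply: iw; apply: sfun_le mw.
  apply: ulm => n Nn; apply: contrapT => ni; apply: nsep; exists n => // gni.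
  by apply: ni; apply: le_trans gni; rewrite lexI lexx andbT (le_trans (lex1 n) topg).
exists x; split; first exact/closure_sfun_unionP.
by move=> a ax; apply: contrapT => aw; exact: xw a aw ax.
Qed.

Lemma int1_cl2_sfun_union N :
  int1 (cl2 (sfun_union N)) = sfun_union (lower_bounds (upper_bounds N)).
Proof.
apply/predeqP => y; split; [exact: int1_cl2_sub_upper_lower | exact: upper_lower_sub_int1_cl2].
Qed.

Lemma normal_rel_ann_DMset a b :
  normal_ideal (rel_ann a b) <-> DMset (compl (down (setminus (sfun a) (sfun b)))).
Proof.
rewrite compl_down_diff; split.
- move=> [_ normalN]; split; first exact: open_sfun_union.
  by split; [exact: upset_sfun_union | rewrite int1_cl2_sfun_union -normalN].
- move=> [_ [_]]; rewrite int1_cl2_sfun_union => DM.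
  have idN := is_ideal_rel_ann a b; split; first by case: idN => _ [].
  apply/predeqP => m; split; first by move=> Nm u; apply.
  by apply: sfun_union_sub_ideal idN _ m; rewrite DM.
Qed.

Lemma DMset_compl_down_clopen
  (DMdiff : forall U V, is_clopen_upset U -> is_clopen_upset V ->
     DMset (compl (down (setminus U V)))) U :
  is_clopen U -> DMset (compl (down U)).
Proof.
move=> [openU closedU].
apply: DMset_intro; [exact: open_compl_down | exact: compl_down_upset |].
move=> y int1y; apply: contrapT => /contrapT [w [Uw yw]].
have [c [d [[cw dw] cdU]]] := openU w Uw.
have [_ [_ DMcd]] := DMdiff _ _ (clopen_upset_sfun c) (clopen_upset_sfun d).
have : int1 (cl2 (compl (down (setminus (sfun c) (sfun d))))) y.
  apply: int1_cl2_mono int1y => x nx [v [cdv xv]]; apply: nx.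
  by exists v; split=> //; exact: cdU.
by rewrite DMcd; apply; exists w; split.
Qed.

End PriestleySpace.

Theorem theorem5p11 (disp : Order.disp_t) (A : tbDistrLatticeType disp) :
  (proHeyting A <->
     (forall U V : PSpace A -> Prop, is_clopen_upset U -> is_clopen_upset V ->
        DMset (compl (down (setminus U V))))) /\
  ((forall U V : PSpace A -> Prop, is_clopen_upset U -> is_clopen_upset V ->
        DMset (compl (down (setminus U V)))) <->
     (forall U : PSpace A -> Prop, is_clopen U -> DMset (compl (down U)))).
Proof.
split; split.
- move=> proH U V /clopen_upset_eq [a ->] /clopen_upset_eq [b ->].
  exact/normal_rel_ann_DMset.
- move=> DMdiff a b; apply/normal_rel_ann_DMset.
  by apply: DMdiff; exact: clopen_upset_sfun.
- exact: DMset_compl_down_clopen.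
- by move=> DMclopen U V cU cV; apply: DMclopen; exact: clopen_setminus.
Qed.
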